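(* Let $\mathcal{G}=\langle S,A,T,s_0,F\rangle$ be a two-player turn-based deterministic reachability game. For any disjoint $X,Y\subseteq\mathrm{Win}_2(\mathcal{G},F)\setminus F$, we have $\mathrm{DASWin}_1(X,Y)\subseteq\mathrm{DSWin}_1(X,Y)$.
   Context: A two-player turn-based deterministic reachability game is a tuple $\mathcal{G}=\langle S,A,T,s_0,F\rangle$: $S$ finite, partitioned into P1 states $S_1$ and P2 states $S_2$; $A=A_1\cup A_2$ (P1 and P2 actions); $T:(S_1\times A_1)\cup(S_2\times A_2)\to S$ deterministic, possibly partial ($a$ enabled at $s$ iff $T(s,a)$ defined; every state has an enabled action); $s_0$ initial; $F\subseteq S$ a set of sink states (P2's goal). For a target $R$: $Z_0=R$, $Z_{k+1}=Z_k\cup\{s\in S_1:T(s,a)\in Z_k\ \forall\text{ enabled }a\}\cup\{s\in S_2:T(s,a)\in Z_k\text{ for some enabled }a\}$, $\mathrm{Win}_2(\mathcal{G},R)=\bigcup_kZ_k$, $\mathrm{rank}_{\mathcal{G},R}(s)=\min\{k:s\in Z_k\}$ ($\infty$ if none). For disjoint $X,Y\subseteq\mathrm{Win}_2(\mathcal{G},F)\setminus F$ (traps $X$, fake targets $Y$): the true game $\mathcal{G}^1_{X,Y}$ has states $S$ and transitions $T_{X,Y}(q,a)=T(q,a)$ if $q\notin X\cup Y$, $T_{X,Y}(q,a)=q$ if $q\in X\cup Y$; P2's perceptual game $\mathcal{G}^2_{X,Y}$ has transitions $T$ and goal $F\cup Y$, with $\mathrm{rank}_{\mathcal{G}^2_{X,Y}}:=\mathrm{rank}_{\mathcal{G},F\cup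 Y}$. A memoryless randomized strategy of player $i$ maps each $q\in S_i$ to a distribution over enabled actions (deterministic if all are point masses); a pair of strategies and a start state determine the set of generated paths and a probability measure on paths of $\mathcal{G}^1_{X,Y}$. Sure-winning notion: for $q\in S_2\cap\mathrm{Win}_2(\mathcal{G},F)\setminus(F\cup Y)$, $\mathsf{SRActs}_{X,Y}(q)=\{a\text{ enabled}:\mathrm{rank}_{\mathcal{G}^2_{X,Y}}(T(q,a))<\mathrm{rank}_{\mathcal{G}^2_{X,Y}}(q)\}$, and all enabled actions at every other state; a memoryless deterministic strategy is subjectively rationalizable if it always picks an action in $\mathsf{SRActs}_{X,Y}$; a memoryless deterministic P1 strategy $\pi_1$ is stealthy deceptive sure winning at $s$ if it is subjectively rationalizable and for every subjectively rationalizable memoryless deterministic P2 strategy $\pi_2$ every path from $s$ generated by $(\pi_1,\pi_2)$ in $\mathcal{G}^1_{X,Y}$ visits $X\cup Y$ within finitely many steps; $\mathrm{DSWin}_1(X,Y)$ is the set of states where such a strategy exists. Almost-sure notion: for $q\in S_2\cap\mathrm{Win}_2(\mathcal{G},F)\setminus F$, $\widehat{\mathsf{SRActs}}(q)=\{a\text{ enabled}:T(q,a)\in\mathrm{Win}_2(\mathcal{G},F)\}$, and all enabled actions at every other state; a memoryless randomized strategy is subjectively rationalizable if at each of its player's states $q$ its support is a nonempty subset of $\widehat{\mathsf{SRActs}}(q)$; a memoryless randomized P1 strategy $\pi_1$ is stealthy deceptive almost-sure winning at $s$ if it is subjectively rationalizable and for every subjectively rationalizable memoryless randomized P2 strategy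 $\pi_2$ the path of $\mathcal{G}^1_{X,Y}$ from $s$ under $(\pi_1,\pi_2)$ visits $X\cup Y$ with probability one; $\mathrm{DASWin}_1(X,Y)$ is the set of states where such a strategy exists. *)

From HB Require Import structures.
From mathcomp Require Import all_boot all_order all_algebra.
From mathcomp Require Import boolp reals.
Set Implicit Arguments. Unset Strict Implicit. Unset Printing Implicit Defensive.
Import Order.TTheory GRing.Theory Num.Theory.
Local Open Scope ring_scope.

(* S1 = P1 states (P2 states S2 = complement), A1/A2 = P1/P2 actions,
   trans = partial transition function T (None = undefined), goal = F. *)
Record game (S A : finType) := Game {
  S1 : {set S};
  A1 : {set A};
  A2 : {set A};
  trans : S -> A -> option S;
  init : S;
  goal : {set S} }.

Section Games.
Variables (S A : finType) (G : game S A).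

Definition enabled (s : S) (a : A) : bool := trans G s a != None.

Definition succ_in (s : S) (a : A) (Z : {set S}) : bool :=
  if trans G s a is Some t then t \in Z else false.

Definition valid_game : Prop :=
  [/\ A1 G :|: A2 G = [set: A],
      (forall s a, enabled s a ->
         ((s \in S1 G) && (a \in A1 G)) || ((s \notin S1 G) && (a \in A2 G))),
      (forall s, exists a, enabled s a) &
      (forall f a, f \in goal G -> enabled f a -> trans G f a = Some f)].

Fixpoint attr (R : {set S}) (k : nat) : {set S} :=
  match k with
  | 0 => R
  | k'.+1 =>
      let Z := attr R k' in
      Z :|: [set s | (s \in S1 G) && [forall a, enabled s a ==> succ_in s a Z]]
        :|: [set s | (s \notin S1 G) && [exists a, succ_in s a Z]]
  end.

Definition inWin2 (R : {set S}) (s : S) : Prop := exists k, s \in attr R k.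

(* rank_{G,R}(s) : None stands for infinity *)
Definition rank (R : {set S}) (s : S) : option nat :=
  match pselect (exists k, (fun k => s \in attr R k) k) with
  | left h => Some (@ex_minn (fun k => s \in attr R k) h)
  | right _ => None
  end.

Definition rank_lt (x y : option nat) : bool :=
  match x, y with
  | Some m, Some n => (m < n)%N
  | Some _, None => true
  | None, _ => false
  end.

Definition SRActs (Y : {set S}) (q : S) (a : A) : Prop :=
  enabled q a /\
  ((q \notin S1 G) /\ inWin2 (goal G) q /\ q \notin goal G :|: Y ->
     exists t, trans G q a = Some t /\
       rank_lt (rank (goal G :|: Y) t) (rank (goal G :|: Y) q)).

Definition SRActsHat (q : S) (a : A) : Prop :=
  enabled q a /\
  ((q \notin S1 G) /\ inWin2 (goal G) q /\ q \notin goal G ->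
     exists t, trans G q a = Some t /\ inWin2 (goal G) t).

(* memoryless deterministic strategies: only values at the player's own
   states matter; p1 = true for player 1, false for player 2 *)
Definition dstrat := S -> A.

Definition SR_det (Y : {set S}) (p1 : bool) (sg : dstrat) : Prop :=
  forall q, (q \in S1 G) = p1 -> SRActs Y q (sg q).

(* one step in the true game G^1_{X,Y} under a deterministic profile *)
Definition next (X Y : {set S}) (sg1 sg2 : dstrat) (q : S) : S :=
  if q \in X :|: Y then q
  else odflt q (trans G q (if q \in S1 G then sg1 q else sg2 q)).

Definition DSWin (X Y : {set S}) (s : S) : Prop :=
  exists sg1, SR_det Y true sg1 /\
    forall sg2, SR_det Y false sg2 ->
      exists n, iter n (next X Y sg1 sg2) s \in X :|: Y.

Variable R : realType.
Definition rstrat := S -> {ffun A -> R}.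

Definition SR_rand (p1 : bool) (pi : rstrat) : Prop :=
  forall q, (q \in S1 G) = p1 ->
    [/\ (forall a, 0 <= pi q a), \sum_a pi q a = 1 &
        (forall a, 0 < pi q a -> SRActsHat q a)].

(* probability, in the Markov chain induced on G^1_{X,Y} by (pi1, pi2),
   of visiting X :|: Y within n steps from q *)
Fixpoint preach (X Y : {set S}) (pi1 pi2 : rstrat) (n : nat) (q : S) : R :=
  if q \in X :|: Y then 1
  else match n with
       | 0 => 0
       | n'.+1 =>
           \sum_a (if q \in S1 G then pi1 q a else pi2 q a) *
                  (if trans G q a is Some t then preach X Y pi1 pi2 n' t else 0)
       end.

(* X :|: Y is visited with probability one: sup_n preach n s = 1 *)
Definition visits_as (X Y : {set S}) (pi1 pi2 : rstrat) (s : S) : Prop :=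
  forall eps : R, 0 < eps -> exists n, 1 - eps < preach X Y pi1 pi2 n s.

Definition DASWin (X Y : {set S}) (s : S) : Prop :=
  exists pi1, SR_rand true pi1 /\
    forall pi2, SR_rand false pi2 -> visits_as X Y pi1 pi2 s.

End Games.

From Pilot Require Import Defs.
From HB Require Import structures.
From mathcomp Require Import all_boot all_order all_algebra.
From mathcomp Require Import boolp reals.
Set Implicit Arguments. Unset Strict Implicit. Unset Printing Implicit Defensive.
Import Order.TTheory GRing.Theory Num.Theory.

(* Let W, the union of the layers [sr_attr k], be the sure attractor of P1 to
   X :|: Y in the game where P2 may only play the rank-decreasing actions of
   SRActs.  From W, P1's attractor strategy forces a visit to X :|: Y against
   every subjectively rationalizable P2 strategy.  Outside W, every P2 state
   has an allowed action that stays outside W, and no P1 action enters W.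
   Since Y lies in Win_2(G, F), rank-decreasing actions lead into Win_2(G, F),
   so the point-mass strategy on these escaping actions is also subjectively
   rationalizable in the almost-sure sense; under it X :|: Y is never reached,
   so states outside W are not almost-sure winning for P1. *)

Lemma finite_uniform_bound (T : finType) (P : T -> nat -> Prop) :
  (forall x k k', k <= k' -> P x k -> P x k') ->
  (forall x, exists k, P x k) -> exists K, forall x, P x K.
Proof.
move=> P_mono /choice [k Pk]; exists (\max_x k x) => x.
exact: P_mono (leq_bigmax x) (Pk x).
Qed.

Lemma subset_chain (T : finType) (Z : nat -> {set T}) :
  (forall k, Z k \subset Z k.+1) -> forall k k', k <= k' -> Z k \subset Z k'.
Proof.
move=> Z_succ; apply: (homo_leq (r := fun B C => B \subset C)) => // B1 B2 B3.
exact: subset_trans.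
Qed.

Section Attractor.
Variables (S A : finType) (G : game S A).

Lemma succ_inP s a (Z : {set S}) :
  reflect (exists2 t, trans G s a = Some t & t \in Z) (succ_in G s a Z).
Proof.
rewrite /succ_in; case: trans => [t|]; last by constructor; case.
by apply: (iffP idP) => [tZ|[_ [<-]]]; first exists t.
Qed.

Lemma succ_in_subset s a (Z Z' : {set S}) :
  Z \subset Z' -> succ_in G s a Z -> succ_in G s a Z'.
Proof.
by move=> ZZ' /succ_inP [t st tZ]; apply/succ_inP; exists t => //; apply: (subsetP ZZ').
Qed.

Lemma attr_subset_succ (R : {set S}) k : attr G R k \subset attr G R k.+1.
Proof. by rewrite /= -setUA subsetUl. Qed.

Lemma attr_mono (R : {set S}) k k' : k <= k' -> attr G R k \subset attr G R k'.
Proof. exact/subset_chain/attr_subset_succ. Qed.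

Lemma attr_shift (R R' : {set S}) K :
  R \subset attr G R' K -> forall k, attr G R k \subset attr G R' (K + k).
Proof.
move=> RR'; elim=> [|k IHk]; first by rewrite addn0.
rewrite addnS /=; apply/subsetP => q; rewrite !inE => /orP [/orP [qk|]|].
- by rewrite (subsetP IHk q qk).
- case/andP=> qS1 /forallP succ; rewrite qS1 /=; apply/orP; left; apply/orP; right.
  apply/forallP => a; apply/implyP => /(implyP (succ a)); exact: succ_in_subset.
- case/andP=> qS2 /existsP [a qa]; rewrite qS2 /=; apply/orP; right.
  by apply/existsP; exists a; apply: succ_in_subset qa.
Qed.

Lemma inWin2_attrU (R R' : {set S}) k t :
  (forall r, r \in R' -> inWin2 G R r) -> t \in attr G (R :|: R') k -> inWin2 G R t.
Proof.
move=> R'_win tk.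
have [K R'K] : exists K, forall r, r \in R' -> r \in attr G R K.
  apply: (finite_uniform_bound (P := fun r j => r \in R' -> r \in attr G R j)).
    by move=> r k1 k2 k12 rk1 /rk1; apply/subsetP/attr_mono.
  move=> r; have [/R'_win [j rj]|] := boolP (r \in R'); first by exists j.
  by exists 0 => /negP.
have RR'K : R :|: R' \subset attr G R K.
  by apply/subsetP => r /setUP [rR|/R'K //]; apply: (subsetP (attr_mono R (leq0n K))).
by exists (K + k); apply: (subsetP (attr_shift RR'K k)).
Qed.

Lemma inWin2_P2_succ (R : {set S}) q :
  inWin2 G R q -> q \notin R -> q \notin S1 G ->
  exists a t, trans G q a = Some t /\ inWin2 G R t.
Proof.
case=> k; elim: k q => [|k IHk] q /=; first by move=> ->.
rewrite !inE => qk qR qS2; rewrite (negbTE qS2) orbF /= in qk.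
case/orP: qk => [qk|]; first exact: IHk.
by case/existsP => a /succ_inP [t qt tk]; exists a, t; split => //; exists k.
Qed.

Lemma SRActsHat_exists q : (exists a, enabled G q a) -> exists a, SRActsHat G q a.
Proof.
case=> a0 qa0.
case: (pselect [/\ q \notin S1 G, inWin2 G (goal G) q & q \notin goal G]).
  case=> qS2 qW qF; have [a [t [qt tW]]] := inWin2_P2_succ qW qF qS2.
  by exists a; split => [|_]; [rewrite /enabled qt | exists t].
by move=> qN; exists a0; split => // [[qS2 [qW qF]]]; case: qN.
Qed.

Lemma SRActs_SRActsHat (Y : {set S}) q a :
  (forall y, y \in Y -> inWin2 G (goal G) y) -> q \notin Y ->
  SRActs G Y q a -> SRActsHat G q a.
Proof.
move=> Y_win qY [qa qrank]; split => // [[qS2 [qW qF]]].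
have qFY : q \notin goal G :|: Y by rewrite inE negb_or qF.
have [t [qt t_lt_q]] := qrank (conj qS2 (conj qW qFY)); exists t; split => //.
move: t_lt_q; rewrite /rank; case: pselect => // [[k tk]] _.
exact: inWin2_attrU Y_win tk.
Qed.

End Attractor.

Section PointMass.
Local Open Scope ring_scope.
Variables (R : realType) (S A : finType) (G : game S A).

Definition dirac_rstrat (b : dstrat S A) : rstrat S A R :=
  fun q => [ffun a => (a == b q)%:R].

Lemma SR_rand_dirac p1 (b : dstrat S A) :
  (forall q, (q \in S1 G) = p1 -> SRActsHat G q (b q)) ->
  SR_rand G p1 (dirac_rstrat b).
Proof.
move=> b_sr q qp1; split => [a||a]; rewrite ?ffunE.
- by rewrite ler0n.
- rewrite (bigD1 (b q)) //= ffunE eqxx big1 ?addr0 // => a /negbTE.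
  by rewrite ffunE => ->.
- by case: eqP => [-> _|_]; [exact: b_sr | rewrite ltxx].
Qed.

Lemma preach_dirac_trap (X Y : {set S}) (pi1 : rstrat S A R) (b : dstrat S A)
    (Z : S -> Prop) :
  (forall q, Z q -> q \notin X :|: Y) ->
  (forall q a t, Z q -> q \in S1 G -> trans G q a = Some t -> Z t) ->
  (forall q, Z q -> q \notin S1 G -> exists2 t, trans G q (b q) = Some t & Z t) ->
  forall n q, Z q -> preach G X Y pi1 (dirac_rstrat b) n q = 0.
Proof.
move=> ZXY Z_P1 Z_P2; elim=> [|n IHn] q Zq /=; rewrite (negbTE (ZXY q Zq)) //.
apply: big1 => a _; have [qS1|qS2] := ifPn.
  by case qa: trans => [t|]; rewrite ?mulr0 // IHn ?mulr0 //; exact: Z_P1 qa.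
rewrite ffunE; case: eqP => [->|_]; last by rewrite mul0r.
by have [t -> Zt] := Z_P2 q Zq qS2; rewrite IHn ?mulr0.
Qed.

End PointMass.

Section SRAttractor.
Variables (S A : finType) (G : game S A) (X Y : {set S}).
Hypothesis G_enabled : forall q, exists a, enabled G q a.

Fixpoint sr_attr (k : nat) : {set S} :=
  if k is k'.+1 then
    let Z := sr_attr k' in
    Z :|: [set q | (q \in S1 G) && [exists a, succ_in G q a Z]]
      :|: [set q | (q \notin S1 G) && [forall a, `[< SRActs G Y q a >] ==> succ_in G q a Z]]
  else X :|: Y.

Lemma sr_attr_subset_succ k : sr_attr k \subset sr_attr k.+1.
Proof. by rewrite /= -setUA subsetUl. Qed.

Lemma sr_attr_mono k k' : k <= k' -> sr_attr k \subset sr_attr k'.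
Proof. exact/subset_chain/sr_attr_subset_succ. Qed.

Lemma sr_attr_XY k : X :|: Y \subset sr_attr k.
Proof. exact: (sr_attr_mono (leq0n k)). Qed.

Lemma sr_attr_P1 k q a :
  q \in S1 G -> succ_in G q a (sr_attr k) -> q \in sr_attr k.+1.
Proof.
move=> qS1 qa; rewrite /= !inE qS1 /=; apply/orP; left; apply/orP; right.
by apply/existsP; exists a.
Qed.

Lemma sr_attr_P2 k q :
  q \notin S1 G -> (forall a, SRActs G Y q a -> succ_in G q a (sr_attr k)) ->
  q \in sr_attr k.+1.
Proof.
move=> qS2 qsucc; rewrite /= !inE qS2 /=; apply/orP; right.
by apply/forallP => a; apply/implyP => /asboolP; exact: qsucc.
Qed.

Lemma sr_attr_layer_P1 k q :
  q \in S1 G -> q \in sr_attr k.+1 -> q \notin sr_attr k ->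
  exists a, succ_in G q a (sr_attr k).
Proof.
by move=> qS1; rewrite /= !inE qS1 /= orbF => /orP [->//|/existsP].
Qed.

Lemma sr_attr_layer_P2 k q a :
  q \notin S1 G -> q \in sr_attr k.+1 -> q \notin sr_attr k ->
  SRActs G Y q a -> succ_in G q a (sr_attr k).
Proof.
move=> qS2; rewrite /= !inE (negbTE qS2) /= orbF => /orP [->//|/forallP qsucc] _ qa.
by apply: (implyP (qsucc a)); apply/asboolP.
Qed.

Lemma sr_attr_layer_unique k k' q :
  q \in sr_attr k.+1 -> q \notin sr_attr k ->
  q \in sr_attr k'.+1 -> q \notin sr_attr k' -> k = k'.
Proof.
move=> qk1 qk qk'1 qk'; case: (ltngtP k k') => // [kk'|k'k].
  by case/negP: qk'; apply: (subsetP (sr_attr_mono kk')).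
by case/negP: qk; apply: (subsetP (sr_attr_mono k'k)).
Qed.

Lemma sr_attr_strategy : exists sg1 : dstrat S A,
  (forall q, enabled G q (sg1 q)) /\
  forall k q, q \in S1 G -> q \in sr_attr k.+1 -> q \notin sr_attr k ->
    succ_in G q (sg1 q) (sr_attr k).
Proof.
suff /choice [sg1 sg1P] : forall q, exists a, enabled G q a /\
    forall k, q \in S1 G -> q \in sr_attr k.+1 -> q \notin sr_attr k ->
      succ_in G q a (sr_attr k).
  exists sg1; split => [q|k q]; first by case: (sg1P q).
  by case: (sg1P q) => _; apply.
move=> q; case: (pselect (exists k, [/\ q \in S1 G, q \in sr_attr k.+1 & q \notin sr_attr k])).
  case=> k [qS1 qk1 qk]; have [a qa] := sr_attr_layer_P1 qS1 qk1 qk.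
  exists a; split; first by case/succ_inP: qa => t qt _; rewrite /enabled qt.
  by move=> k' _ qk'1 qk'; rewrite -(sr_attr_layer_unique qk1 qk qk'1 qk').
move=> no_layer; have [a qa] := G_enabled q; exists a; split => // k qS1 qk1 qk.
by case: no_layer; exists k.
Qed.

Lemma sr_attr_reach (sg1 sg2 : dstrat S A) k q :
  (forall k q, q \in S1 G -> q \in sr_attr k.+1 -> q \notin sr_attr k ->
     succ_in G q (sg1 q) (sr_attr k)) ->
  SR_det G Y false sg2 ->
  q \in sr_attr k -> exists n, iter n (Defs.next G X Y sg1 sg2) q \in X :|: Y.
Proof.
move=> sg1_attr sg2_sr; elim: k q => [|k IHk] q qk1; first by exists 0.
have [|qk] := boolP (q \in sr_attr k); first exact: IHk.
have [t qt tk] : exists2 t,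
    trans G q (if q \in S1 G then sg1 q else sg2 q) = Some t & t \in sr_attr k.
  apply/succ_inP; case: ifPn => [qS1|qS2]; first exact: sg1_attr.
  by apply: sr_attr_layer_P2 => //; apply: sg2_sr; rewrite (negbTE qS2).
have [n tn] := IHk t tk; exists n.+1.
have qXY : q \notin X :|: Y by exact: contra (subsetP (sr_attr_XY k) q) qk.
by rewrite iterSr /Defs.next (negbTE qXY) qt.
Qed.

Lemma sr_attr_DSWin k s : s \in sr_attr k -> DSWin G X Y s.
Proof.
move=> sk; have [sg1 [sg1_en sg1_attr]] := sr_attr_strategy.
exists sg1; split => [q qS1|sg2 sg2_sr]; last exact: sr_attr_reach sg1_attr sg2_sr sk.
by split; [exact: sg1_en | case=> /negP; rewrite qS1].
Qed.

Lemma sr_attr_P2_escape q :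
  q \notin S1 G -> (forall k, q \notin sr_attr k) ->
  exists a, SRActs G Y q a /\ forall k, ~~ succ_in G q a (sr_attr k).
Proof.
move=> qS2 qout; apply: contrapT => no_escape.
have [K qK] : exists K, forall a, SRActs G Y q a -> succ_in G q a (sr_attr K).
  apply: (finite_uniform_bound
    (P := fun a j => SRActs G Y q a -> succ_in G q a (sr_attr j))).
    by move=> a j j' jj' qa /qa; exact: succ_in_subset (sr_attr_mono jj').
  move=> a; apply: contrapT => a_escapes; apply: no_escape; exists a; split.
    by apply: contrapT => a_nsr; apply: a_escapes; exists 0.
  by move=> j; apply/negP => qaj; apply: a_escapes; exists j.
by case/negP: (qout K.+1); exact: sr_attr_P2.
Qed.

Lemma sr_attr_spoiler :
  (forall y, y \in Y -> inWin2 G (goal G) y) ->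
  exists b : dstrat S A, forall q, q \notin S1 G ->
    SRActsHat G q (b q) /\
    ((forall k, q \notin sr_attr k) ->
       exists2 t, trans G q (b q) = Some t & forall k, t \notin sr_attr k).
Proof.
move=> Y_win.
suff /choice [b bP] : forall q, exists a, q \notin S1 G ->
    SRActsHat G q a /\
    ((forall k, q \notin sr_attr k) ->
       exists2 t, trans G q a = Some t & forall k, t \notin sr_attr k).
  by exists b.
move=> q; case: (pselect (forall k, q \notin sr_attr k)) => [qout|qin]; last first.
  have [a qa] := SRActsHat_exists (G_enabled q).
  by exists a => _; split => // qout; case: qin.
have [qS1|qS2] := boolP (q \in S1 G).
  by have [a _] := G_enabled q; exists a => /negP.
have [a [qa a_esc]] := sr_attr_P2_escape qS2 qout.
have qY : q \notin Y by move: (qout 0); rewrite /= inE negb_or => /andP [].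
exists a => _; split; first exact: SRActs_SRActsHat qa.
move=> _; case qt: (trans G q a) => [t|]; last by move: qa.1; rewrite /enabled qt.
exists t => // k; apply/negP => tk.
by case/negP: (a_esc k); apply/succ_inP; exists t.
Qed.

Lemma sr_attr_P1_closed q a t :
  q \in S1 G -> trans G q a = Some t ->
  (forall k, q \notin sr_attr k) -> forall k, t \notin sr_attr k.
Proof.
move=> qS1 qt qout k; apply/negP => tk; case/negP: (qout k.+1).
by apply: (sr_attr_P1 (a := a) qS1); apply/succ_inP; exists t.
Qed.

Lemma DASWin_sr_attr (R : realType) s :
  (forall y, y \in Y -> inWin2 G (goal G) y) ->
  DASWin G R X Y s -> exists k, s \in sr_attr k.
Proof.
move=> Y_win [pi1 [_ pi1_as]]; apply: contrapT => s_out.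
have [b b_spoil] := sr_attr_spoiler Y_win.
have b_sr : SR_rand G false (dirac_rstrat R b).
  by apply: SR_rand_dirac => q /negbT /b_spoil [].
have never_reached n : preach G X Y pi1 (dirac_rstrat R b) n s = 0%R.
  apply: (preach_dirac_trap pi1 (Z := fun q => forall k, q \notin sr_attr k)).
  - by move=> q /(_ 0).
  - by move=> q a t qout qS1 qt; exact: sr_attr_P1_closed qt qout.
  - by move=> q qout qS2; have [_] := b_spoil q qS2; apply.
  - by move=> k; apply/negP => sk; apply: s_out; exists k.
by have [n] := pi1_as _ b_sr 1%R ltr01; rewrite never_reached subrr ltxx.
Qed.

End SRAttractor.

Theorem theorem7 (R : realType) (S A : finType) (G : game S A)
  (X Y : {set S}) :
  valid_game G ->
  [disjoint X & Y] ->
  (forall q, q \in X :|: Y -> inWin2 G (goal G) q /\ q \notin goal G) ->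
  forall s, DASWin G R X Y s -> DSWin G X Y s.
Proof.
move=> [_ _ G_enabled _] _ XY_win s s_as.
have Y_win : forall y, y \in Y -> inWin2 G (goal G) y.
  by move=> y yY; case: (XY_win y); rewrite // inE yY orbT.
have [k sk] := DASWin_sr_attr G_enabled Y_win s_as.
exact: (sr_attr_DSWin G_enabled sk).
Qed.
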